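(* Consider the problem and algorithm AC2CD described in the context. At every outer iteration $k$, \[ f(x^k)-f(x^{k+1})\ge\frac{\gamma}{A_u}\,\|x^{k+1}-x^k\|_{\langle j(k)\rangle}^2. \]
   Context: Problem: minimize $f(x)$ subject to $e^T x = b$ and $l_i \le x_i \le u_i$ ($i=1,\dots,n$), where $n\ge 2$, $e$ is the all-ones vector, $b\in\mathbb{R}$, $l_i\in\mathbb{R}\cup\{-\infty\}$, $u_i\in\mathbb{R}\cup\{+\infty\}$, $l_i<u_i$, and $f:\mathbb{R}^n\to\mathbb{R}$ is continuously differentiable with $\nabla f$ Lipschitz continuous on $\mathbb{R}^n$. $\mathcal F$ is the feasible set, $e_i$ the $i$th unit vector. $\|x\|_{\langle j\rangle}=\sqrt{\sum_{i\ne j}x_i^2}$. For $x\in\mathcal F$, $D_h(x)=\min\{x_h-l_h,u_h-x_h\}$. Algorithm AC2CD with parameters $\tau\in(0,1]$, $\gamma,\delta\in(0,1)$, $0<A_l\le A_u<\infty$ and starting point $x^0\in\mathcal F$: for $k=0,1,2,\dots$: let $D^k=\max_h D_h(x^k)$; choose $j(k)$ with $D_{j(k)}(x^k)\ge\tau D^k$; choose a permutation $(p^k_1,\dots,p^k_n)$ of $\{1,\dots,n\}$; set $z^{k,1}=x^k$; for $i=1,\dots,n$ (inner iteration $(k,i)$): $g^{k,i}=\nabla_{j(k)}f(z^{k,i})-\nabla_{p^k_i}f(z^{k,i})$, $d^{k,i}=g^{k,i}(e_{p^k_i}-e_{j(k)})$; $\bar\alpha^{k,i}=\min\{u_{p^k_i}-z^{k,i}_{p^k_i},z^{k,i}_{j(k)}-l_{j(k)}\}/g^{k,i}$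 if $g^{k,i}>0$, $=\min\{z^{k,i}_{p^k_i}-l_{p^k_i},u_{j(k)}-z^{k,i}_{j(k)}\}/|g^{k,i}|$ if $g^{k,i}<0$, $=0$ if $g^{k,i}=0$; choose $A^{k,i}\in[A_l,A_u]$, set $\Delta^{k,i}=\min\{\bar\alpha^{k,i},A^{k,i}\}$; starting from $\alpha=\Delta^{k,i}$, while $f(z^{k,i}+\alpha d^{k,i})>f(z^{k,i})+\gamma\alpha\nabla f(z^{k,i})^Td^{k,i}$ replace $\alpha$ by $\delta\alpha$; $\alpha^{k,i}$ is the final $\alpha$ and $z^{k,i+1}=z^{k,i}+\alpha^{k,i}d^{k,i}$. Then $x^{k+1}=z^{k,n+1}$. Standing assumptions: $\mathcal L_0=\{x\in\mathcal F: f(x)\le f(x^0)\}$ is nonempty and compact, and every $x\in\mathcal L_0$ has some index $i$ with $l_i<x_i<u_i$. *)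

(* R : realType, vectors in R^n are row vectors 'rV[R]_n,
   coordinates are indexed by 'I_n (i.e. 0..n-1 instead of 1..n). *)
From HB Require Import structures.
From mathcomp Require Import all_boot all_order all_algebra perm.
From mathcomp Require Import all_classical all_reals all_analysis.
Set Implicit Arguments. Unset Strict Implicit. Unset Printing Implicit Defensive.
Import Order.TTheory GRing.Theory Num.Theory.
Import numFieldNormedType.Exports.
Local Open Scope classical_set_scope.
Local Open Scope ring_scope.

Section AC2CD.
Variables (R : realType) (n : nat).
Implicit Types (f : 'rV[R]_n -> R) (x z d : 'rV[R]_n) (l u : 'I_n -> \bar R).

Definition unitv (i : 'I_n) : 'rV[R]_n := delta_mx 0 i.

Definition partial f x (i : 'I_n) : R := 'D_(unitv i) f x.

Definition grad_dot f x d : R := \sum_(i < n) partial f x i * d 0 i.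

Definition norm_except (j : 'I_n) (v : 'rV[R]_n) : R :=
  Num.sqrt (\sum_(i < n | i != j) (v 0 i) ^+ 2).

Definition feasible l u (b : R) x : Prop :=
  \sum_(i < n) x 0 i = b /\ forall i, (l i <= (x 0 i)%:E)%E /\ ((x 0 i)%:E <= u i)%E.

Definition Dh l u x (h : 'I_n) : \bar R :=
  Order.min ((x 0 h)%:E - l h)%E (u h - (x 0 h)%:E)%E.

Definition Dmax l u x : \bar R := \big[Order.max/-oo%E]_(h < n) Dh l u x h.

Definition gcoef f z (j p : 'I_n) : R := partial f z j - partial f z p.

Definition dir (j p : 'I_n) (g : R) : 'rV[R]_n := g *: (unitv p - unitv j).

Definition alphabar l u z (j p : 'I_n) (g : R) : \bar R :=
  if 0 < g then
    (Order.min (u p - (z 0 p)%:E) ((z 0 j)%:E - l j) * (g^-1)%:E)%E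
  else if g < 0 then
    (Order.min ((z 0 p)%:E - l p) (u j - (z 0 j)%:E) * ((`|g|)^-1)%:E)%E
  else 0%E.

(* Delta^{k,i} = min{ \bar alpha, A } (finite since A is finite) *)
Definition Delta l u z j p g (A : R) : R :=
  fine (Order.min (alphabar l u z j p g) A%:E).

(* Armijo acceptance test (negation of the while-loop condition) *)
Definition armijo f (gamma : R) z d (a : R) : Prop :=
  f (z + a *: d) <= f z + gamma * a * grad_dot f z d.

(* One inner iteration (k,i): z' = z^{k,i+1} is obtained from z = z^{k,i} with
   working index j, chosen index p, A = A^{k,i} and accepted step a = alpha^{k,i}. *)
Definition inner_step f l u (gamma delta : R) (j p : 'I_n) (A : R)
    z (a : R) z' : Prop :=
  let g := gcoef f z j p in
  let d := dir j p g in
  let D := Delta l u z j p g A in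
  (exists m : nat,
      a = delta ^+ m * D /\ armijo f gamma z d (delta ^+ m * D) /\
      forall m' : nat, (m' < m)%N -> ~ armijo f gamma z d (delta ^+ m' * D))
  /\ z' = z + a *: d.

(* A run of AC2CD: outer iterates x, working indices j, permutations p,
   inner iterates z k i (i = 0..n, shifted by one w.r.t. the paper),
   steps alpha k i and trial parameters A k i. *)
Definition AC2CD_run f l u (b tau gamma delta Al Au : R)
    (x : nat -> 'rV[R]_n) (j : nat -> 'I_n) (p : nat -> 'S_n)
    (z : nat -> nat -> 'rV[R]_n) (alpha A : nat -> 'I_n -> R) : Prop :=
  feasible l u b (x 0%N) /\
  forall k : nat,
    (Dh l u (x k) (j k) >= tau%:E * Dmax l u (x k))%E /\
    z k 0%N = x k /\ z k n = x k.+1 /\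
    forall i : 'I_n,
      Al <= A k i <= Au /\
      inner_step f l u gamma delta (j k) (p k i) (A k i)
                 (z k i) (alpha k i) (z k i.+1).

End AC2CD.

From HB Require Import structures.
From mathcomp Require Import all_boot all_order all_algebra perm.
From mathcomp Require Import all_classical all_reals all_analysis.
From mathcomp Require Import ring lra.
Import Order.TTheory GRing.Theory Num.Theory.
Import numFieldNormedType.Exports.
Local Open Scope classical_set_scope.
Local Open Scope ring_scope.

(* Inner step i moves t_i = alpha_i g_i from coordinate j to coordinate p_i.
   Because alpha_i <= alphabar, the iterate stays in the box, so all step sizes
   are nonnegative and the Armijo test yields a decrease of at least
   gamma alpha_i g_i^2 >= (gamma / A_u) t_i^2, as alpha_i <= A_u.  These
   decreases telescope to f(x^k) - f(x^{k+1}).  Since p is a permutation, each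
   coordinate q <> j is moved by exactly one inner step, so the squared
   ||.||_<j> norm of x^{k+1} - x^k is at most sum_i t_i^2. *)

Definition in_bounds {R : realType} {n : nat} (l u : 'I_n -> \bar R) (z : 'rV[R]_n) :=
  forall i, (l i <= (z 0 i)%:E)%E /\ ((z 0 i)%:E <= u i)%E.

Section InnerStep.
Context {R : realType} {n : nat} {f : 'rV[R]_n -> R} {l u : 'I_n -> \bar R}.
Implicit Types (z : 'rV[R]_n) (i j p q : 'I_n).

Lemma transferE z p j (t : R) q :
  (z + t *: (unitv R p - unitv R j)) 0 q = z 0 q + t * ((q == p)%:R - (q == j)%:R).
Proof. by rewrite /unitv !mxE. Qed.

Lemma in_bounds_transfer z p j (t : R) : in_bounds l u z -> 0 <= t ->
  (t%:E <= u p - (z 0 p)%:E)%E -> (t%:E <= (z 0 j)%:E - l j)%E ->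
  in_bounds l u (z + t *: (unitv R p - unitv R j)).
Proof.
move=> zb t0 tp tj q; rewrite transferE.
have [[lq uq] [lp up] [lj uj]] := And3 (zb q) (zb p) (zb j).
case: (eqVneq q j) => [qj|_]; case: (eqVneq q p) => [qp|_] /=.
- by rewrite subrr mulr0 addr0.
- rewrite qj sub0r mulrN1; split.
    by rewrite EFinB leeBrDr // addeC -lee_suber_addr.
  by apply: le_trans _ uj; rewrite lee_fin gerDl oppr_le0.
- rewrite qp subr0 mulr1; split.
    by apply: le_trans lp _; rewrite lee_fin lerDl.
  by rewrite EFinD addeC -leeBrDr.
- by rewrite subrr mulr0 addr0.
Qed.

Lemma grad_dot_unitv z p : grad_dot f z (unitv R p) = partial f z p.
Proof.
rewrite /grad_dot (bigD1 p) //= big1 => [|i /negbTE ip]; last by rewrite /unitv mxE ip mulr0.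
by rewrite /unitv mxE !eqxx mulr1 addr0.
Qed.

Lemma grad_dot_dir z j p : grad_dot f z (dir j p (gcoef f z j p)) = - gcoef f z j p ^+ 2.
Proof.
have -> : grad_dot f z (dir j p (gcoef f z j p)) =
    gcoef f z j p * (grad_dot f z (unitv R p) - grad_dot f z (unitv R j)).
  rewrite /grad_dot mulrBr !mulr_sumr -sumrB; apply: eq_bigr => i _.
  by rewrite !mxE -!mulrBr mulrCA.
by rewrite !grad_dot_unitv -opprB mulrN -expr2.
Qed.

Lemma alphabar_ge0 z j p (g : R) : in_bounds l u z -> (0 <= alphabar l u z j p g)%E.
Proof.
move=> zb; have gap i : (0 <= (z 0 i)%:E - l i)%E /\ (0 <= u i - (z 0 i)%:E)%E.
  by have [li ui] := zb i; rewrite !sube_ge0 ?fin_numE ?li ?ui ?orbT.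
rewrite /alphabar; case: ifP => [g_gt0|_]; last case: ifP => [g_lt0|_] //.
- by apply: mule_ge0; rewrite ?le_min ?(gap p).2 ?(gap j).1 // lee_fin invr_ge0 ltW.
- by apply: mule_ge0; rewrite ?le_min ?(gap p).1 ?(gap j).2 // lee_fin invr_ge0.
Qed.

Lemma Delta_bounds z j p (g A : R) : (0 <= alphabar l u z j p g)%E -> 0 < A ->
  [/\ 0 <= Delta l u z j p g A, Delta l u z j p g A <= A
    & ((Delta l u z j p g A)%:E <= alphabar l u z j p g)%E].
Proof.
move=> ab_ge0 A_gt0; rewrite /Delta.
set m := Order.min _ _.
have m_ge0 : (0 <= m)%E by rewrite le_min ab_ge0 lee_fin ltW.
have m_leA : (m <= A%:E)%E by rewrite ge_min lexx orbT.
have m_fin : m \is a fin_num by move: m_ge0 m_leA; case: m.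
by rewrite -!lee_fin fineK // m_ge0 m_leA ge_min lexx.
Qed.

Lemma in_bounds_step z j p (g a : R) : in_bounds l u z -> 0 <= a ->
  (a%:E <= alphabar l u z j p g)%E -> in_bounds l u (z + a *: dir j p g).
Proof.
move=> zb a_ge0; rewrite /alphabar /dir scalerA.
case: ifP => [g_gt0|g_le0]; last case: ifP => [g_lt0|g_ge0].
- rewrite lee_pdivlMr // -EFinM le_min => /andP[tp tj].
  by apply: in_bounds_transfer => //; rewrite mulr_ge0 // ltW.
- have g_abs : 0 < `|g| by rewrite normr_gt0 lt_eqF.
  rewrite lee_pdivlMr // -EFinM le_min => /andP[tj tp].
  have -> : (a * g) *: (unitv R p - unitv R j) = (a * `|g|) *: (unitv R j - unitv R p).
    by rewrite ltr0_norm // mulrN scaleNr -scalerN opprB.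
  by apply: in_bounds_transfer; rewrite // mulr_ge0.
- have -> : g = 0 by apply/eqP; rewrite eq_le !leNgt g_le0 g_ge0.
  by rewrite mulr0 scale0r addr0.
Qed.

Lemma inner_step_descent {gamma delta : R} {j p} {A : R} {z} {a : R} {z'} :
  in_bounds l u z -> 0 < A -> 0 <= delta <= 1 ->
  inner_step f l u gamma delta j p A z a z' ->
  [/\ in_bounds l u z', 0 <= a <= A,
      gamma * a * gcoef f z j p ^+ 2 <= f z - f z' &
      z' = z + (a * gcoef f z j p) *: (unitv R p - unitv R j)].
Proof.
move=> zb A_gt0 /andP[delta_ge0 delta_le1] [[m [-> [armijo_m _]]] ->].
set g := gcoef f z j p; set D := Delta l u z j p g A.
have [D_ge0 D_leA D_le_ab] : [/\ 0 <= D, D <= A & (D%:E <= alphabar l u z j p g)%E].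
  by apply: Delta_bounds => //; apply: alphabar_ge0.
have a_ge0 : 0 <= delta ^+ m * D by rewrite mulr_ge0 // exprn_ge0.
have a_leD : delta ^+ m * D <= D by rewrite ler_piMl // exprn_ile1.
split.
- by apply: in_bounds_step => //; apply: le_trans D_le_ab; rewrite lee_fin.
- by rewrite a_ge0 (le_trans a_leD).
- by move: armijo_m; rewrite /armijo grad_dot_dir -/g -/D mulrN; lra.
- by rewrite /dir scalerA.
Qed.

End InnerStep.

Lemma sumr_ord_telescope {V : zmodType} (F : nat -> V) m :
  \sum_(i < m) (F i.+1 - F i) = F m - F 0%N.
Proof. by rewrite -(big_mkord xpredT (fun i => F i.+1 - F i)) telescope_sumr. Qed.

Lemma step_sqr_le {R : realFieldType} (gamma Au a g : R) :
  0 <= gamma -> 0 < Au -> 0 <= a <= Au -> gamma / Au * (a * g) ^+ 2 <= gamma * a * g ^+ 2.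
Proof.
move=> gamma_ge0 Au_gt0 /andP[a_ge0 a_leAu].
have -> : gamma / Au * (a * g) ^+ 2 = gamma * a * g ^+ 2 * (a / Au) by ring.
apply: ler_piMr; first exact: mulr_ge0 (mulr_ge0 gamma_ge0 a_ge0) (sqr_ge0 g).
by rewrite ler_pdivrMr // mul1r.
Qed.

Lemma norm_except_transfers_le {R : realType} {n : nat} (s : 'S_n) j (c : 'I_n -> R) :
  norm_except j (\sum_(i < n) c i *: (unitv R (s i) - unitv R j)) ^+ 2 <= \sum_(i < n) c i ^+ 2.
Proof.
rewrite /norm_except sqr_sqrtr; last by apply: sumr_ge0 => q _; exact: sqr_ge0.
set v := \sum_(i < n) _.
have v_s i : s i != j -> v 0 (s i) = c i.
  move=> sij; rewrite summxE (bigD1 i) //= big1 => [|k ki].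
    by rewrite !mxE /= eqxx (negbTE sij) subr0 mulr1 addr0.
  by rewrite !mxE /= (inj_eq perm_inj) eq_sym (negbTE ki) (negbTE sij) subrr mulr0.
rewrite (reindex_inj (@perm_inj _ s)) /= [leRHS](bigID (fun i => s i != j)) /=.
rewrite (eq_bigr (fun i => c i ^+ 2)) => [|i sij]; last by rewrite v_s.
by rewrite lerDl sumr_ge0 // => i _; exact: sqr_ge0.
Qed.

Section Run.
Context {R : realType} {n : nat} {f : 'rV[R]_n -> R} {b : R} {l u : 'I_n -> \bar R}
  {tau gamma delta Al Au : R} {x : nat -> 'rV[R]_n} {j : nat -> 'I_n} {p : nat -> 'S_n}
  {z : nat -> nat -> 'rV[R]_n} {alpha A : nat -> 'I_n -> R}.
Hypotheses (delta01 : 0 <= delta <= 1) (Al_gt0 : 0 < Al)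
  (run : AC2CD_run f l u b tau gamma delta Al Au x j p z alpha A).

Lemma run_inner_step k (i : 'I_n) : in_bounds l u (z k i) ->
  [/\ in_bounds l u (z k i.+1), 0 <= alpha k i <= Au,
      gamma * alpha k i * gcoef f (z k i) (j k) (p k i) ^+ 2 <= f (z k i) - f (z k i.+1) &
      z k i.+1 = z k i + (alpha k i * gcoef f (z k i) (j k) (p k i)) *:
                 (unitv R (p k i) - unitv R (j k))].
Proof.
move=> zb; have [/andP[Al_le Au_ge] step] := (run.2 k).2.2.2 i.
have [? /andP[a_ge0 a_leA] ? ?] := inner_step_descent zb (lt_le_trans Al_gt0 Al_le) delta01 step.
by split=> //; rewrite a_ge0 (le_trans a_leA).
Qed.

Lemma run_inner_in_bounds k : in_bounds l u (x k) ->
  forall i, (i <= n)%N -> in_bounds l u (z k i).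
Proof.
move=> xb; elim=> [|i IH] i_le; first by rewrite (run.2 k).2.1.
by have [] := run_inner_step k (Ordinal i_le) (IH (ltnW i_le)).
Qed.

Lemma run_in_bounds k : in_bounds l u (x k).
Proof.
elim: k => [|k IH]; first exact: run.1.2.
by rewrite -(run.2 k).2.2.1; exact: run_inner_in_bounds.
Qed.

End Run.

Theorem proposition3 (R : realType) (n : nat) (f : 'rV[R]_n -> R)
    (b : R) (l u : 'I_n -> \bar R)
    (tau gamma delta Al Au : R)
    (x : nat -> 'rV[R]_n) (j : nat -> 'I_n) (p : nat -> 'S_n)
    (z : nat -> nat -> 'rV[R]_n) (alpha A : nat -> 'I_n -> R) :
  (1 < n)%N ->
  (* bounds: l_i in R u {-oo}, u_i in R u {+oo}, l_i < u_i *)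
  (forall i, l i != +oo%E) -> (forall i, u i != -oo%E) ->
  (forall i, (l i < u i)%E) ->
  (* f is continuously differentiable with Lipschitz gradient *)
  (forall y, differentiable f y) ->
  (forall i, continuous (fun y => partial f y i)) ->
  (exists L : R, forall y y' i,
      `|partial f y i - partial f y' i| <= L * `|y - y'|) ->
  (* parameters *)
  0 < tau <= 1 -> 0 < gamma < 1 -> 0 < delta < 1 -> 0 < Al <= Au ->
  (* standing assumptions on the level set L_0 *)
  let L0 := [set y | feasible l u b y /\ f y <= f (x 0%N)] in
  L0 !=set0 -> compact L0 ->
  (forall y, L0 y -> exists i, (l i < (y 0 i)%:E < u i)%E) ->
  (* (x, j, p, z, alpha, A) is a run of AC2CD *)
  AC2CD_run f l u b tau gamma delta Al Au x j p z alpha A ->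
  forall k : nat,
    f (x k) - f (x k.+1) >= gamma / Au * norm_except (j k) (x k.+1 - x k) ^+ 2.
Proof.
move=> _ _ _ _ _ _ _ _ /andP[gamma_gt0 _] /andP[delta_gt0 delta_lt1] /andP[Al_gt0 Al_le_Au].
move=> _ _ _ _ run k.
have delta01 : 0 <= delta <= 1 by rewrite !ltW.
have Au_gt0 := lt_le_trans Al_gt0 Al_le_Au.
have [_ [z0 [zn _]]] := run.2 k.
have zb i := run_inner_in_bounds delta01 Al_gt0 run k (run_in_bounds delta01 Al_gt0 run k) i.
have step (i : 'I_n) := run_inner_step delta01 Al_gt0 run k i (zb i (ltnW (ltn_ord i))).
pose c (i : 'I_n) := alpha k i * gcoef f (z k i) (j k) (p k i).
have -> : x k.+1 - x k = \sum_(i < n) c i *: (unitv R (p k i) - unitv R (j k)).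
  rewrite -z0 -zn -sumr_ord_telescope; apply: eq_bigr => i _.
  by have [_ _ _ ->] := step i; rewrite addrC addKr.
have -> : f (x k) - f (x k.+1) = \sum_(i < n) (f (z k i) - f (z k i.+1)).
  rewrite -z0 -zn -opprB -(sumr_ord_telescope (fun i => f (z k i))) -sumrN.
  by apply: eq_bigr => i _; rewrite opprB.
have ratio_ge0 : 0 <= gamma / Au by rewrite divr_ge0 ?ltW.
apply: le_trans (ler_wpM2l ratio_ge0 (norm_except_transfers_le (p k) (j k) c)) _.
rewrite mulr_sumr; apply: ler_sum => i _; have [_ alpha_bounds descent _] := step i.
apply: le_trans descent; exact: step_sqr_le (ltW gamma_gt0) Au_gt0 alpha_bounds.
Qed.
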